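(* Fix $n\ge1$ and $\mathbf a_n=(a_1,\dots,a_n)\in\mathcal A_n$. The function $F_{\mathbf a_n}:\bar\nabla\to\mathbb R$ is continuous on $\bar\nabla$ (with the subspace topology of $\mathbb R^\infty$) if and only if $a_1=0$.
   Context: $\bar\nabla=\{(p_1,p_2,\dots):p_1\ge p_2\ge\dots\ge0,\ \sum_k p_k\le1\}$ with the subspace topology of the product space $\mathbb R^\infty$. $\mathcal A_n=\{(a_1,\dots,a_n):a_k\in\mathbb Z_{\ge0},\ \sum_{i=1}^n ia_i=n\}$. For $\mathbf p\in\bar\nabla$, $$F_{\mathbf a_n}(\mathbf p)=C(n,\mathbf a_n)\sum\prod_{i=1}^n\prod_{j=1}^{a_i}p_{l_{ij}}^{\,i},\qquad C(n,\mathbf a_n)=\frac{n!}{\prod_{j=1}^n (j!)^{a_j}a_j!},$$ where the sum is over all families of positive integers $l_{ij}$ ($1\le i\le n$, $1\le j\le a_i$) that are pairwise distinct and satisfy $l_{i1}<\dots<l_{ia_i}$ for each $i$ (this is the probability of sample configuration $\mathbf a_n$ given allele frequencies $\mathbf p$, extended directly to $\bar\nabla$). *)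

From mathcomp Require Import all_boot all_order all_algebra.
From mathcomp Require Import all_classical all_reals all_analysis.
Set Implicit Arguments. Unset Strict Implicit. Unset Printing Implicit Defensive.
Import Order.TTheory GRing.Theory Num.Theory.
Import numFieldNormedType.Exports.
Local Open Scope classical_set_scope.
Local Open Scope ring_scope.

(* Conventions (0-based shifts):
   - a sample configuration a_n = (a_1,...,a_n) is  a : 'I_n -> nat,
     with  a k  standing for  a_{k+1};
   - a point p = (p_1, p_2, ...) of R^infty is  p : nat -> R,
     with  p k  standing for  p_{k+1}. *)

Definition in_An (n : nat) (a : 'I_n -> nat) : Prop :=
  (\sum_(k < n) k.+1 * a k)%N = n.

Definition nabla_bar (R : realType) : set (nat -> R) :=
  [set p | (forall k, p k.+1 <= p k) /\ (forall k, 0 <= p k) /\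
           (forall N, \sum_(k < N) p k <= 1)].

(* the list of exponents attached to the slots (i,j), 1<=i<=n, 1<=j<=a_i,
   listed block by block: a_1 copies of 1, then a_2 copies of 2, ... *)
Definition expo (n : nat) (a : 'I_n -> nat) : seq nat :=
  flatten [seq nseq (a k) k.+1 | k <- enum 'I_n].

(* admissible families (l_{ij}) : pairwise distinct indices, increasing
   within each block i (indices are 0-based: l stands for l_{ij} - 1) *)
Definition families (n : nat) (a : 'I_n -> nat) : set (seq nat) :=
  [set l | size l = size (expo a) /\ uniq l /\
     (forall k, k.+1 < size l -> nth 0 (expo a) k = nth 0 (expo a) k.+1 ->
        nth 0 l k < nth 0 l k.+1)%N].

Definition Ccoef (n : nat) (a : 'I_n -> nat) (R : realType) : R :=
  (n`!)%:R / (\prod_(k < n) ((k.+1)`! ^ a k * (a k)`!))%N%:R.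

Definition term (n : nat) (a : 'I_n -> nat) (R : realType) (p : nat -> R)
  (l : seq nat) : R :=
  \prod_(k < size l) p (nth 0 l k) ^+ nth 0 (expo a) k.

(* F_{a_n}(p); the sum of non-negative terms is finite on nabla_bar. *)
Definition F (n : nat) (a : 'I_n -> nat) (R : realType)
  (p : {ptws nat -> R}) : R :=
  Ccoef a R * fine (\esum_(l in families a) (term a p l)%:E).

From mathcomp Require Import all_boot all_order all_algebra.
From mathcomp Require Import all_classical all_reals all_analysis.
From mathcomp Require Import finmap zify lra.
Set Implicit Arguments. Unset Strict Implicit. Unset Printing Implicit Defensive.
Import Order.TTheory GRing.Theory Num.Theory.
Import numFieldNormedType.Exports.
Local Open Scope classical_set_scope.
Local Open Scope ring_scope.

(* F is a sum, over admissible families l, of monomials prod_k p_(l_k)^(e_k),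
   where the exponent list e = expo a consists of a_1 ones followed by
   exponents >= 2.  On the closed simplex p_(N+1) <= 1/(N+2), and the monomials
   are dominated by the expansion of (sum_j p_j)^(size e) <= 1.
   If a_1 = 0, a monomial involving an index beyond N contains a square
   p_l^2 <= p_(N+1) p_l, so F is within 1/(N+2) of its (continuous) truncation
   to indices <= N, uniformly on the simplex.
   If a_1 = r > 0, let s be the number of exponents >= 2; put mass 1/(2(s+1))
   on s atoms and spread mass 1/2 evenly over r*K further atoms.  As K grows
   these points converge coordinatewise to a point with s nonzero coordinates,
   where F vanishes since a family needs r + s distinct indices.  Yet F stays
   bounded below: the r exponents 1 may pick one light atom in each of r blocks
   of K atoms, giving K^r families of weight (2rK)^(-r) each. *)

Lemma ler_sum_uniq_sub (R : numDomainType) (T : eqType) (s1 s2 : seq T)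
    (f : T -> R) :
  uniq s1 -> uniq s2 -> {subset s1 <= s2} -> {in s2, forall x, 0 <= f x} ->
  \sum_(x <- s1) f x <= \sum_(x <- s2) f x.
Proof.
move=> u1 u2 s12 f0; rewrite [leRHS](bigID (mem s1)) /=.
have -> : \sum_(x <- s2 | x \in s1) f x = \sum_(x <- s1) f x.
  rewrite -big_filter; apply/perm_big/uniq_perm; rewrite ?filter_uniq // => x.
  by rewrite mem_filter; apply/andP/idP => [[]//|x1]; split=> //; apply: s12.
by rewrite lerDl big_seq_cond sumr_ge0 // => x /andP[/f0].
Qed.

Lemma slot_lt w i j ti tj : (ti < w)%N -> (i < j)%N -> (i * w + ti < j * w + tj)%N.
Proof. nia. Qed.

Lemma uniform_approx_continuous_within {R : realType} {T : topologicalType}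
    (A : set T) (f : T -> R) (g : nat -> T -> R) :
  (forall N, continuous (g N)) ->
  (forall e, 0 < e -> exists N, forall x, A x -> `|f x - g N x| < e) ->
  {within A, continuous f}.
Proof.
move=> gC fg; apply/subspace_continuousP => p Ap; apply/cvgrPdist_lt => e e0.
have e30 : 0 < e / 3 by rewrite divr_gt0.
have [N fgN] := fg _ e30.
have /cvgrPdist_lt/(_ _ e30) := gC N p; apply: filterS => x gx Ax.
rewrite /from_subspace; have := fgN _ Ap; have := fgN _ Ax; move: gx.
rewrite !ltr_norml => /andP[? ?] /andP[? ?] /andP[? ?].
by apply/andP; split; lra.
Qed.

Section NablaBar.
Context {R : realType} (q : nat -> R).

Lemma nabla_bar_finsupp T :
  (forall k, q k.+1 <= q k) -> (forall k, 0 <= q k) ->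
  (forall k, (T <= k)%N -> q k = 0) -> \sum_(k < T) q k <= 1 -> nabla_bar q.
Proof.
move=> q_dec q0 qT sumT; split; [done | split => // N].
apply: le_trans sumT; rewrite -!(big_mkord xpredT).
have [NT|/ltnW TN] := leqP N T.
  by rewrite (big_cat_nat (leq0n N) NT) lerDl /= big_seq sumr_ge0.
rewrite (big_cat_nat (leq0n T) TN) /= [X in _ + X]big1_seq ?addr0 //.
by move=> k /andP[_]; rewrite mem_index_iota => /andP[/qT].
Qed.

Hypothesis q_nb : nabla_bar q.

Lemma nabla_bar_ge0 k : 0 <= q k.
Proof. by case: q_nb => _ []. Qed.

Lemma nabla_bar_nonincr : {homo q : j k / (j <= k)%N >-> k <= j}.
Proof.
move=> j k; elim: k => [|k IH]; first by rewrite leqn0 => /eqP ->.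
rewrite leq_eqVlt ltnS => /orP[/eqP -> //|/IH]; exact/le_trans/q_nb.1.
Qed.

Lemma nabla_bar_le1 k : q k <= 1.
Proof.
case: q_nb => _ [_ /(_ k.+1)]; apply: le_trans.
by rewrite big_ord_recr lerDr sumr_ge0 // => i _; exact: nabla_bar_ge0.
Qed.

Lemma nabla_bar_index_le1 N : N.+1%:R * q N <= 1.
Proof.
case: q_nb => _ [_ /(_ N.+1)]; apply: le_trans.
rewrite mulr_natl -[in q N *+ _](card_ord N.+1) -sumr_const ler_sum // => i _.
by apply: nabla_bar_nonincr; rewrite -ltnS.
Qed.

End NablaBar.

Section BoundedSeqs.
Variable L : nat.

Definition seq_of_ffun M (f : {ffun 'I_L -> 'I_M}) : seq nat :=
  [seq val (f i) | i <- enum 'I_L].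

Lemma size_seq_of_ffun M (f : {ffun 'I_L -> 'I_M}) : size (seq_of_ffun f) = L.
Proof. by rewrite size_map size_enum_ord. Qed.

Lemma nth_seq_of_ffun M (f : {ffun 'I_L -> 'I_M}) (i : 'I_L) :
  nth 0%N (seq_of_ffun f) i = f i.
Proof. by rewrite (nth_map i) ?size_enum_ord // nth_ord_enum. Qed.

Lemma seq_of_ffun_inj M : injective (@seq_of_ffun M).
Proof.
by move=> f g fg; apply/ffunP => i; apply/val_inj; rewrite /= -!nth_seq_of_ffun fg.
Qed.

Definition bounded_seqs M :=
  [seq seq_of_ffun f | f <- enum {ffun 'I_L -> 'I_M.+1}].

Lemma bounded_seqs_uniq M : uniq (bounded_seqs M).
Proof. by rewrite map_inj_uniq ?enum_uniq //; exact: seq_of_ffun_inj. Qed.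

Lemma mem_bounded_seqs M l :
  (l \in bounded_seqs M) = (size l == L) && all (fun x => x <= M)%N l.
Proof.
apply/idP/idP => [/mapP[f _ ->]|/andP[/eqP sl /allP lM]].
  rewrite size_seq_of_ffun eqxx; apply/allP => _ /mapP[i _ ->].
  exact: (ltn_ord (f i)).
pose f := [ffun i : 'I_L => inord (nth 0%N l i) : 'I_M.+1].
have -> : l = seq_of_ffun f.
  apply: (@eq_from_nth _ 0%N); rewrite ?size_seq_of_ffun // sl => k kL.
  rewrite (nth_seq_of_ffun f (Ordinal kL)) ffunE inordK // ltnS.
  by apply/lM/mem_nth; rewrite sl.
by apply: map_f; rewrite mem_enum.
Qed.

Lemma big_bounded_seqs (T : Type) (idx : T) (op : Monoid.com_law idx) M
    (P : pred (seq nat)) (g : seq nat -> T) :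
  \big[op/idx]_(l <- bounded_seqs M | P l) g l =
  \big[op/idx]_(f : {ffun 'I_L -> 'I_M.+1} | P (seq_of_ffun f)) g (seq_of_ffun f).
Proof. by rewrite big_map big_enum_cond. Qed.

End BoundedSeqs.

Lemma esum_ge_big_seq (R : realType) (T : choiceType) (S : set T) (g : T -> R)
    (s : seq T) :
  uniq s -> (forall x, x \in s -> S x) -> (forall x, S x -> 0 <= g x) ->
  ((\sum_(x <- s) g x)%:E <= \esum_(x in S) (g x)%:E)%E.
Proof.
move=> us sS g0; apply: esum_ge; exists [set` s].
  by split; [exact: finite_seq | move=> x /sS].
by rewrite -fsbig_seq // sumEFin.
Qed.

(* Every finite subfamily of lists of length [L] lies in some [bounded_seqs L M]. *)
Lemma esum_le_bounded_seqs (R : realType) L (S : set (seq nat))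
    (g : seq nat -> R) (B : R) :
  (forall l, S l -> size l = L) -> (forall l, S l -> 0 <= g l) ->
  (forall M, \sum_(l <- bounded_seqs L M | `[< S l >]) g l <= B) ->
  (\esum_(l in S) (g l)%:E <= B%:E)%E.
Proof.
move=> SL g0 gB; apply: ge_ereal_sup => _ [X [finX XS] <-].
rewrite fsbig_finite // sumEFin lee_fin.
set s := (fset_set X : seq _); pose M := (\max_(l <- s) \max_(x <- l) x)%N.
apply: le_trans (gB M); rewrite -[leRHS]big_filter.
apply: ler_sum_uniq_sub; rewrite ?filter_uniq ?bounded_seqs_uniq //.
- exact: fset_uniq.
- move=> l ls; have /XS Sl : X l by move: ls; rewrite in_fset_set // => /set_mem.
  rewrite mem_filter asboolT //= mem_bounded_seqs SL // eqxx /=.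
  apply/allP => x xl; apply: leq_trans (@leq_bigmax_seq _ l xpredT id x xl isT) _.
  exact: (@leq_bigmax_seq _ s xpredT (fun l => \max_(x <- l) x)%N l ls isT).
- by move=> l; rewrite mem_filter => /andP[/asboolP /g0].
Qed.

Section Exponents.
Variables (n : nat) (a : 'I_n -> nat).

Lemma expo_gt0 e : e \in expo a -> (0 < e)%N.
Proof. by case/flattenP => _ /mapP[k _ ->] /nseqP[->]. Qed.

Lemma expo_nseq_cat (hn : (0 < n)%N) :
  exists2 rest, expo a = nseq (a (Ordinal hn)) 1%N ++ rest &
    forall e, e \in rest -> (2 <= e)%N.
Proof.
case: n a hn => // n' a' hn; rewrite /expo enum_ordSl /=.
have -> : Ordinal hn = ord0 by apply: val_inj.
eexists => // _ /flattenP[_ /mapP[_ /mapP[j _ ->] ->] /nseqP[-> _]].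
by rewrite /= /bump leq0n.
Qed.

End Exponents.

Section PartialSums.
Context {R : realType} {n : nat} (a : 'I_n -> nat).
Local Notation L := (size (expo a)).

Lemma term_ge0 (q : nat -> R) l : nabla_bar q -> 0 <= term a q l.
Proof. by move=> q_nb; rewrite prodr_ge0 // => k _; rewrite exprn_ge0 ?nabla_bar_ge0. Qed.

Lemma term_seq_of_ffun M (q : nat -> R) (f : {ffun 'I_L -> 'I_M}) :
  term a q (seq_of_ffun f) = \prod_(k < L) q (f k) ^+ nth 0%N (expo a) k.
Proof.
pose g k := q (nth 0%N (seq_of_ffun f) k) ^+ nth 0%N (expo a) k.
rewrite /term -(big_mkord xpredT g) size_seq_of_ffun.
by rewrite big_mkord; apply: eq_bigr => k _; rewrite /g nth_seq_of_ffun.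
Qed.

Lemma term_le_prod M (q : nat -> R) (f : {ffun 'I_L -> 'I_M}) : nabla_bar q ->
  term a q (seq_of_ffun f) <= \prod_(k < L) q (f k).
Proof.
move=> q_nb; rewrite term_seq_of_ffun ler_prod // => k _.
rewrite exprn_ge0 ?nabla_bar_ge0 //= ler_iXnr ?nabla_bar_ge0 ?nabla_bar_le1 //.
by rewrite (@expo_gt0 _ a) // mem_nth.
Qed.

Lemma sum_prod_le1 M (q : nat -> R) : nabla_bar q ->
  \sum_(f : {ffun 'I_L -> 'I_M.+1}) \prod_(k < L) q (f k) <= 1.
Proof.
move=> q_nb; rewrite -(bigA_distr_bigA (fun _ (j : 'I_M.+1) => q j)) /=.
rewrite prodr_const card_ord exprn_ile1 //; last by case: q_nb => _ [_]; apply.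
by rewrite sumr_ge0 // => i _; exact: nabla_bar_ge0.
Qed.

Lemma Ccoef_gt0 : 0 < Ccoef a R.
Proof.
rewrite divr_gt0 // ltr0n ?fact_gt0 // prodn_gt0 // => i.
by rewrite muln_gt0 expn_gt0 !fact_gt0.
Qed.

Definition Fpart M (q : nat -> R) :=
  \sum_(l <- bounded_seqs L M | `[< families a l >]) term a q l.

Definition Fsum (q : nat -> R) := fine (\esum_(l in families a) (term a q l)%:E).

Lemma Fpart_le1 M (q : nat -> R) : nabla_bar q -> Fpart M q <= 1.
Proof.
move=> q_nb; apply: le_trans (sum_prod_le1 M q_nb).
rewrite /Fpart big_bounded_seqs big_mkcond ler_sum // => f _.
case: ifP => _; first exact: term_le_prod.
by rewrite prodr_ge0 // => *; exact: nabla_bar_ge0.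
Qed.

Lemma esum_term_le1 (q : nat -> R) : nabla_bar q ->
  (\esum_(l in families a) (term a q l)%:E <= 1%:E)%E.
Proof.
move=> q_nb; apply: (esum_le_bounded_seqs (L := L)) => [l []|l _|M] //.
  exact: term_ge0.
exact: Fpart_le1.
Qed.

Lemma esum_termE (q : nat -> R) : nabla_bar q ->
  \esum_(l in families a) (term a q l)%:E = (Fsum q)%:E.
Proof.
move=> q_nb; rewrite /Fsum fineK // ge0_fin_numE.
  exact: le_lt_trans (esum_term_le1 q_nb) (ltry _).
by apply: esum_ge0 => l _; rewrite lee_fin term_ge0.
Qed.

Lemma Fpart_le_Fsum M (q : nat -> R) : nabla_bar q -> Fpart M q <= Fsum q.
Proof.
move=> q_nb; rewrite -lee_fin -esum_termE // /Fpart -big_filter.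
apply: esum_ge_big_seq; rewrite ?filter_uniq ?bounded_seqs_uniq //.
  by move=> l; rewrite mem_filter => /andP[/asboolP].
by move=> l _; exact: term_ge0.
Qed.

Lemma Fsum_le (q : nat -> R) B : nabla_bar q -> (forall M, Fpart M q <= B) ->
  Fsum q <= B.
Proof.
move=> q_nb qB; rewrite -lee_fin -esum_termE //.
by apply: (esum_le_bounded_seqs (L := L)) => [l []|l _|] //; exact: term_ge0.
Qed.

Lemma Fpart_continuous M : continuous (Fpart M : {ptws nat -> R} -> R).
Proof.
apply: (continuous_big add_continuous) => l _.
apply: (continuous_big mul_continuous) => k _.
move=> p; exact (continuous_comp (@proj_continuous _ (fun=> R) _ p)
  (@exprn_continuous R _ _)).
Qed.

End PartialSums.

Section Continuity.
Context {R : realType} {n : nat} (a : 'I_n -> nat).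
Local Notation L := (size (expo a)).
Hypothesis expo_ge2 : forall e, e \in expo a -> (2 <= e)%N.

(* Without exponent 1, a coordinate beyond [N] enters squared, hence with a
   factor [q N.+1]. *)
Lemma term_le_tail M N (q : nat -> R) (f : {ffun 'I_L -> 'I_M}) (k : 'I_L) :
  nabla_bar q -> (N < f k)%N ->
  term a q (seq_of_ffun f) <= q N.+1 * \prod_(j < L) q (f j).
Proof.
move=> q_nb Nfk; have q0 := nabla_bar_ge0 q_nb; have q1 := nabla_bar_le1 q_nb.
rewrite term_seq_of_ffun (bigD1 k) // [X in _ <= _ * X](bigD1 k) //= mulrA.
apply: ler_pM.
- exact: exprn_ge0.
- by rewrite prodr_ge0 // => j _; exact: exprn_ge0.
- apply: (@le_trans _ _ (q (f k) ^+ 2)).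
    by rewrite ler_wiXn2l // expo_ge2 // mem_nth.
  by rewrite expr2 ler_wpM2r // nabla_bar_nonincr.
- rewrite ler_prod // => j _.
  by rewrite exprn_ge0 //= ler_iXnr // (@expo_gt0 _ a) // mem_nth.
Qed.

Lemma Fpart_split M N (q : nat -> R) : nabla_bar q ->
  Fpart a M q <= Fpart a N q + q N.+1.
Proof.
move=> q_nb; rewrite /Fpart (bigID (all (fun x => x <= N)%N)) /=; apply: lerD.
  rewrite -big_filter -[leRHS]big_filter.
  apply: ler_sum_uniq_sub; rewrite ?filter_uniq ?bounded_seqs_uniq //.
    move=> l; rewrite !mem_filter !mem_bounded_seqs => /andP[/andP[-> lN]].
    by rewrite lN => /andP[->].
  by move=> l _; exact: term_ge0.
rewrite big_bounded_seqs.
apply: (@le_trans _ _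
  (\sum_(f : {ffun 'I_L -> 'I_M.+1}) q N.+1 * \prod_(j < L) q (f j))).
  rewrite big_mkcond ler_sum // => f _.
  case: ifP => [/andP[_ /allPn[_ /mapP[k _ ->]]]|_].
    by rewrite -ltnNge; exact: term_le_tail.
  by rewrite mulr_ge0 ?prodr_ge0 // => *; exact: nabla_bar_ge0.
by rewrite -mulr_sumr ler_piMr ?nabla_bar_ge0 ?sum_prod_le1.
Qed.

Lemma Fsum_Fpart_dist N (q : nat -> R) : nabla_bar q ->
  `|Fsum a q - Fpart a N q| <= N.+2%:R^-1.
Proof.
move=> q_nb; rewrite ger0_norm ?subr_ge0 ?Fpart_le_Fsum //.
rewrite lerBlDl; apply: Fsum_le => // M; apply: le_trans (Fpart_split M N q_nb) _.
by rewrite lerD2l -[leRHS]mulr1 ler_pdivlMl ?ltr0n ?nabla_bar_index_le1.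
Qed.

Lemma Fsum_continuous_within :
  {within (@nabla_bar R : set {ptws nat -> R}), continuous (Fsum a)}.
Proof.
apply: (uniform_approx_continuous_within (@Fpart_continuous _ _ a)) => e e0.
pose N := Num.Def.archi_bound e^-1.
exists N => q q_nb; apply: le_lt_trans (Fsum_Fpart_dist N q_nb) _.
rewrite invf_plt ?posrE ?ltr0n //; apply: lt_le_trans (archi_boundP _) _.
  by rewrite invr_ge0 ltW.
by rewrite ler_nat -addn2 leq_addr.
Qed.

End Continuity.

Section Discontinuity.
Context {R : realType} {n : nat} (a : 'I_n -> nat).
Local Notation L := (size (expo a)).
Variables (r : nat) (rest : seq nat).
Hypothesis r_gt0 : (0 < r)%N.
Hypothesis expoE : expo a = nseq r 1%N ++ rest.
Hypothesis rest_ge2 : forall e, e \in rest -> (2 <= e)%N.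
Local Notation s := (size rest).

Lemma size_expo : L = (r + s)%N.
Proof. by rewrite expoE size_cat size_nseq. Qed.

Definition heavy : R := (2 * s.+1%:R)^-1.
Definition width m := (m + s.+1)%N.
Definition light m : R := (2 * (r * width m)%:R)^-1.

(* [s] atoms of mass [heavy] followed by [r * width m] atoms of mass [light m];
   as [m] grows the light atoms spread out and vanish pointwise. *)
Definition approx m k : R :=
  if (k < s)%N then heavy else if (k < s + r * width m)%N then light m else 0.
Definition limit k : R := if (k < s)%N then heavy else 0.

Lemma rwidth_gt0 m : (0 < r * width m)%N.
Proof. by rewrite muln_gt0 r_gt0 /width addnS. Qed.

Lemma heavy_gt0 : 0 < heavy.
Proof. by rewrite invr_gt0 mulr_gt0 ?ltr0n. Qed.

Lemma light_gt0 m : 0 < light m.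
Proof. by rewrite invr_gt0 mulr_gt0 ?ltr0n ?rwidth_gt0. Qed.

Lemma light_le_heavy m : light m <= heavy.
Proof.
rewrite lef_pV2 ?posrE ?mulr_gt0 ?ltr0n ?rwidth_gt0 // ler_pM2l // ler_nat.
by rewrite (leq_trans _ (leq_pmull _ r_gt0)) // leq_addl.
Qed.

Lemma heavy_mass : s%:R * heavy <= 2^-1.
Proof.
rewrite /heavy invfM mulrCA ler_piMr ?invr_ge0 ?ler0n //.
by rewrite ler_pdivrMr ?ltr0n // mul1r ler_nat.
Qed.

Lemma light_mass m : (r * width m)%:R * light m = 2^-1.
Proof. by rewrite /light invfM mulrCA mulfV ?mulr1 // pnatr_eq0 -lt0n rwidth_gt0. Qed.

Lemma limit_nabla_bar : nabla_bar limit.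
Proof.
have limit_ge0 k : 0 <= limit k.
  by rewrite /limit; case: ifP => // _; exact/ltW/heavy_gt0.
apply: (@nabla_bar_finsupp _ _ s) => //.
- move=> k; case: (ltnP k.+1 s) => [ks|sk]; first by rewrite /limit ks (ltnW ks).
  by rewrite [limit k.+1]/limit ltnNge sk; apply: limit_ge0.
- by move=> k sk; rewrite /limit ltnNge sk.
rewrite (eq_bigr (fun=> heavy)) => [|k _]; last by rewrite /limit ltn_ord.
by rewrite sumr_const card_ord -mulr_natl (le_trans heavy_mass) // invf_le1 ?ler1n.
Qed.

Lemma approx_nabla_bar m : nabla_bar (approx m).
Proof.
have approx_ge0 k : 0 <= approx m k.
  rewrite /approx; case: ifP => _; first exact/ltW/heavy_gt0.
  by case: ifP => _ //; exact/ltW/light_gt0.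
apply: (@nabla_bar_finsupp _ _ (s + r * width m)) => //.
- move=> k; rewrite [approx m k.+1]/approx.
  case: ltnP => [ks|_]; first by rewrite /approx (ltnW ks).
  case: ltnP => [kK|_]; last exact: approx_ge0.
  by rewrite /approx (ltnW kK); case: ifP => // _; exact: light_le_heavy.
- move=> k sk; have sk' : (s <= k)%N := leq_trans (leq_addr _ _) sk.
  by rewrite /approx ltnNge sk' ltnNge sk.
rewrite -(big_mkord xpredT) (big_cat_nat (leq0n s) (leq_addr _ _)) /=.
rewrite (eq_big_nat _ _ (F2 := fun=> heavy)) => [|k /andP[_ ks]]; last first.
  by rewrite /approx ks.
rewrite [X in _ + X](eq_big_nat _ _ (F2 := fun=> light m)); last first.
  by move=> k /andP[sk ks]; rewrite /approx ltnNge sk ks.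
rewrite !sumr_const_nat subn0 addKn -[heavy *+ _]mulr_natl.
by rewrite -[light m *+ _]mulr_natl light_mass; have := heavy_mass; lra.
Qed.

Lemma approx_cvg :
  {ptws, (approx : nat -> {ptws nat -> R}) @ \oo --> (limit : {ptws nat -> R})}.
Proof.
apply/pointwise_cvgP => k.
suff : (fun m => approx m k) @ \oo --> limit k by [].
rewrite /approx /limit; case: ltnP => sk.
  exact: cvg_cst.
apply: (@squeeze_cvgr _ _ _ _ (fun=> 0) harmonic); last exact: cvg_harmonic.
  apply: nearW => m /=; case: ifP => _; first rewrite ltW ?light_gt0 //=.
    rewrite /light lef_pV2 ?posrE ?mulr_gt0 ?ltr0n ?rwidth_gt0 //.
    by rewrite -natrM ler_nat /width; nia.
  by rewrite lexx invr_ge0 ler0n.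
exact: cvg_cst.
Qed.

Lemma term_limit l : families a l -> term a limit l = 0.
Proof.
case=> sl [ul _].
have /allPn[x xl] : ~~ all (fun x => x < s)%N l.
  apply/negP => /allP ls.
  have : (size l <= size (iota 0 s))%N.
    by apply: uniq_leq_size ul _ => x /ls; rewrite mem_iota.
  by rewrite size_iota sl size_expo; lia.
rewrite -leqNgt => sx; have xk : (index x l < size l)%N by rewrite index_mem.
rewrite /term (bigD1 (Ordinal xk)) //= nth_index // /limit ltnNge sx expr0n /=.
have : (0 < nth 0%N (expo a) (index x l))%N.
  by rewrite (@expo_gt0 _ a) // mem_nth -?sl.
by case: (nth 0%N _ _) => // e _; rewrite mul0r.
Qed.

Lemma Fpart_limit M : Fpart a M limit = 0.
Proof. by rewrite /Fpart big1 // => l /asboolP /term_limit. Qed.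

Lemma Fsum_limit : Fsum a limit = 0.
Proof.
apply/le_anti/andP; split.
  by apply: Fsum_le limit_nabla_bar _ => M; rewrite Fpart_limit.
by rewrite -(Fpart_limit 0) Fpart_le_Fsum //; exact: limit_nabla_bar.
Qed.

Section Witness.
Variables (m : nat) (t : {ffun 'I_r -> 'I_(width m)}).

(* One family per choice [t i] of a light atom in the [i]-th of [r] blocks of
   [width m] light atoms, completed by the [s] heavy atoms. *)
Definition witness : seq nat :=
  [seq (s + i * width m + t i)%N | i : 'I_r <- enum 'I_r] ++ iota 0 s.

Lemma size_witness : size witness = L.
Proof. by rewrite size_cat size_map size_enum_ord size_iota size_expo. Qed.

Lemma nth_witness_light (i : 'I_r) :
  nth 0%N witness i = (s + i * width m + t i)%N.
Proof.
rewrite nth_cat size_map size_enum_ord ltn_ord.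
by rewrite (nth_map i) ?size_enum_ord ?nth_ord_enum.
Qed.

Lemma nth_witness_heavy j : (j < s)%N -> nth 0%N witness (r + j) = j.
Proof.
by move=> js; rewrite nth_cat size_map size_enum_ord ltnNge leq_addr addKn nth_iota.
Qed.

Lemma witness_light_range (i : 'I_r) :
  (s <= s + i * width m + t i < s + r * width m)%N.
Proof.
by rewrite -addnA leq_addr ltn_add2l -[X in (_ < X)%N]addn0 slot_lt.
Qed.

Lemma witness_light_mono (i j : 'I_r) : (i < j)%N ->
  (s + i * width m + t i < s + j * width m + t j)%N.
Proof. by move=> ij; rewrite -addnA -[X in (_ < X)%N]addnA ltn_add2l slot_lt. Qed.

Lemma witness_uniq : uniq witness.
Proof.
rewrite cat_uniq iota_uniq andbT; apply/andP; split.
  rewrite map_inj_uniq ?enum_uniq // => i j tij; apply/val_inj.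
  by case: (ltngtP i j) => // /witness_light_mono; rewrite tij ltnn.
apply/hasPn => x; rewrite mem_iota add0n => /andP[_ xs].
apply/mapP => -[i _ xi]; have /andP[+ _] := witness_light_range i.
by rewrite -xi leqNgt xs.
Qed.

Lemma witness_families : families a witness.
Proof.
split; first by rewrite size_witness.
split => [|k]; first exact: witness_uniq.
rewrite size_witness size_expo expoE => kS.
have [kr|rk] := ltnP k.+1 r.
  rewrite (nth_witness_light (Ordinal (ltnW kr))) (nth_witness_light (Ordinal kr)).
  by move=> _; apply: witness_light_mono.
have [kr|rk'] := ltnP k r.
  rewrite !nth_cat size_nseq kr ltnNge rk /= nth_nseq kr => one_e.
  have : nth 0%N rest (k.+1 - r) \in rest by rewrite mem_nth // ltn_subLR.
  by move/rest_ge2; rewrite -one_e.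
move=> _; rewrite -(subnKC rk') -addnS !nth_witness_heavy //; lia.
Qed.

Lemma witness_bounded : witness \in bounded_seqs L (s + r * width m).
Proof.
rewrite mem_bounded_seqs size_witness eqxx /=; apply/allP => x.
rewrite mem_cat mem_iota add0n => /orP[/mapP[i _ ->]|/andP[_ xs]].
  by have /andP[_ /ltnW] := witness_light_range i.
by rewrite (leq_trans (ltnW xs)) ?leq_addr.
Qed.

Lemma term_witness :
  term a (approx m) witness = light m ^+ r * \prod_(e <- rest) heavy ^+ e.
Proof.
pose g k := approx m (nth 0%N witness k) ^+ nth 0%N (expo a) k.
rewrite /term -(big_mkord xpredT g) size_witness size_expo big_mkord.
rewrite big_split_ord /=; congr (_ * _).
  rewrite -[r in light m ^+ r]card_ord -prodr_const; apply: eq_bigr => i _.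
  rewrite /g /= nth_witness_light expoE nth_cat size_nseq ltn_ord nth_nseq ltn_ord.
  rewrite expr1.
  by have /andP[sl ls] := witness_light_range i; rewrite /approx ltnNge sl ls.
rewrite (big_nth 0%N) big_mkord; apply: eq_bigr => j _.
rewrite /g /= nth_witness_heavy // expoE nth_cat size_nseq ltnNge leq_addr addKn.
by rewrite /approx ltn_ord.
Qed.

End Witness.

Lemma witness_inj m : injective (@witness m).
Proof.
move=> t1 t2 t12; apply/ffunP => i; apply/val_inj.
by have := nth_witness_light t1 i; rewrite t12 nth_witness_light => /addnI.
Qed.

Definition lower_bound : R :=
  ((2 * r%:R)^-1) ^+ r * \prod_(e <- rest) heavy ^+ e.

Lemma lower_bound_gt0 : 0 < lower_bound.
Proof.
rewrite mulr_gt0 ?exprn_gt0 ?invr_gt0 ?mulr_gt0 ?ltr0n //.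
by rewrite prodr_gt0 // => e _; rewrite exprn_gt0 ?heavy_gt0.
Qed.

Lemma width_light m : (width m)%:R * light m = (2 * r%:R)^-1.
Proof.
by rewrite /light natrM !invfM mulrC -!mulrA mulVf ?mulr1 // pnatr_eq0 /width addnS.
Qed.

Lemma lower_bound_le_Fsum m : lower_bound <= Fsum a (approx m).
Proof.
apply: le_trans (Fpart_le_Fsum a (s + r * width m) (approx_nabla_bar m)).
pose witnesses := [seq witness t | t <- enum {ffun 'I_r -> 'I_(width m)}].
have -> : lower_bound = \sum_(l <- witnesses) term a (approx m) l.
  rewrite big_map big_enum /= (eq_bigr _ (fun t _ => term_witness t)).
  rewrite sumr_const card_ffun !card_ord -mulr_natl natrX mulrA -exprMn.
  by rewrite width_light.
rewrite /Fpart -[leRHS]big_filter.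
apply: ler_sum_uniq_sub; rewrite ?filter_uniq ?bounded_seqs_uniq //.
- by rewrite map_inj_uniq ?enum_uniq //; exact: witness_inj.
- move=> _ /mapP[t _ ->]; rewrite mem_filter witness_bounded andbT.
  by apply/asboolP; exact: witness_families.
- by move=> l _; exact: term_ge0 (approx_nabla_bar m).
Qed.

Lemma F_not_continuous :
  ~ {within (@nabla_bar R : set {ptws nat -> R}), continuous (@F n a R)}.
Proof.
move=> /subspace_continuousP /(_ limit limit_nabla_bar) Fcont.
have approx_within : (approx : nat -> {ptws nat -> R}) @ \oo -->
    within (@nabla_bar R : set {ptws nat -> R}) (nbhs (limit : {ptws nat -> R})).
  move=> W /approx_cvg; apply: (filterS (fun m in_W => in_W (approx_nabla_bar m))).
have F_cvg := cvg_comp _ _ approx_within Fcont.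
have : Ccoef a R * lower_bound <= lim ((@F n a R \o approx) @ \oo).
  apply: limr_ge; first exact: cvgP F_cvg.
  by apply: nearW => m; rewrite ler_wpM2l ?(ltW (Ccoef_gt0 a)) ?lower_bound_le_Fsum.
rewrite (cvg_lim (@Rhausdorff R) F_cvg) /from_subspace.
have -> : F a limit = Ccoef a R * Fsum a limit by [].
by rewrite Fsum_limit mulr0 leNgt mulr_gt0 ?Ccoef_gt0 ?lower_bound_gt0.
Qed.

End Discontinuity.

Lemma F_continuous_within {R : realType} {n : nat} (a : 'I_n -> nat) :
  (forall e, e \in expo a -> (2 <= e)%N) ->
  {within (@nabla_bar R : set {ptws nat -> R}), continuous (@F n a R)}.
Proof.
move=> expo_ge2; apply/subspace_continuousP => p p_nb.
apply: cvgM; first exact: cvg_cst.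
by have /subspace_continuousP := @Fsum_continuous_within R n a expo_ge2; apply.
Qed.

Theorem lemma3p1 (R : realType) (n : nat) (hn : (1 <= n)%N)
  (a : 'I_n -> nat) (ha : in_An a) :
  {within (@nabla_bar R : set {ptws nat -> R}), continuous (@F n a R)}
  <-> a (Ordinal hn) = 0%N.
Proof.
have [rest expoE rest_ge2] := expo_nseq_cat a hn.
split => [F_cont | a1_eq0].
  apply/eqP/negPn/negP => a1_neq0.
  by apply: (F_not_continuous _ expoE rest_ge2 F_cont); rewrite lt0n.
by apply: F_continuous_within => e; rewrite expoE a1_eq0; exact: rest_ge2.
Qed.
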